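(* Let $G$ be a graph on $[n]$ and $p$ in the Shearer region $\mathcal S$ of $G$. Then for every $S\subseteq[n]$, $$\sum_{J\subseteq S}\frac{q_J(p)}{q_\emptyset(p)}\le\prod_{j\in S}\Big(1+\frac{q_{\{j\}}(p)}{q_\emptyset(p)}\Big).$$
   Context: Shearer notation: $\mathrm{Ind}$ is the family of independent sets of $G$ (including $\emptyset$); for $p\in\mathbb R^n$ and $I\subseteq[n]$, $p^I=\prod_{i\in I}p_i$. For $S\subseteq[n]$, $q_S(p)=\sum_{I\in\mathrm{Ind},\,S\subseteq I}(-1)^{|I\setminus S|}p^I$ (so $q_S=0$ if $S\notin\mathrm{Ind}$) and $\breve q_S(p)=\sum_{I\in\mathrm{Ind},\,I\subseteq S}(-1)^{|I|}p^I$. The Shearer region is $\mathcal S=\{p\in(0,1)^n:\breve q_S(p)>0\ \forall S\subseteq[n]\}$, which equals $\{p\in(0,1)^n: q_I(p)>0\ \forall I\in\mathrm{Ind}\}$. *)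

From HB Require Import structures.
From mathcomp Require Import all_boot all_order all_algebra.
Set Implicit Arguments. Unset Strict Implicit. Unset Printing Implicit Defensive.
Import Order.TTheory GRing.Theory Num.Theory.
Local Open Scope ring_scope.

Definition simple_graph (n : nat) (e : rel 'I_n) : Prop :=
  symmetric e /\ irreflexive e.

Definition indep (n : nat) (e : rel 'I_n) (I : {set 'I_n}) : bool :=
  [forall i in I, forall j in I, ~~ e i j].

Definition pw (R : nzRingType) (n : nat) (p : 'I_n -> R) (I : {set 'I_n}) : R :=
  \prod_(i in I) p i.

Definition qS (R : nzRingType) (n : nat) (e : rel 'I_n) (p : 'I_n -> R)
  (S : {set 'I_n}) : R :=
  \sum_(I : {set 'I_n} | indep e I && (S \subset I)) (-1) ^+ #|I :\: S| * pw p I.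

Definition qbreve (R : nzRingType) (n : nat) (e : rel 'I_n) (p : 'I_n -> R)
  (S : {set 'I_n}) : R :=
  \sum_(I : {set 'I_n} | indep e I && (I \subset S)) (-1) ^+ #|I| * pw p I.

Definition shearer (R : realFieldType) (n : nat) (e : rel 'I_n) (p : 'I_n -> R) : Prop :=
  (forall i, 0 < p i < 1) /\ (forall S : {set 'I_n}, 0 < qbreve e p S).

From HB Require Import structures.
From mathcomp Require Import all_boot all_order all_algebra.
From mathcomp Require Import lra.

(* Summing q_J over the subsets J of S leaves the alternating sum over the
   independent sets avoiding S, i.e. breve q of the complement of S, and
   q_emptyset + q_{j} = breve q([n] \ j); so the claim reads
   breve q(S^c) / breve q([n]) <= prod_(j in S) breve q([n] \ j) / breve q([n]).
   The recursion breve q(W + k) = breve q(W) - p_k breve q(W \ N(k)) shows, by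
   induction on |W|, that on the Shearer region the ratio
   breve q(W) / breve q(W + k) is nondecreasing in W (k not in W); telescoping
   along the elements of S then gives the bound. *)

Set Implicit Arguments.
Unset Strict Implicit.
Unset Printing Implicit Defensive.
Import Order.TTheory GRing.Theory Num.Theory.
Local Open Scope ring_scope.

Lemma big_subsetU1 (T : finType) (V : nmodType) (F : {set T} -> V)
    (X : {set T}) (k : T) :
  k \notin X ->
  \sum_(J : {set T} | J \subset k |: X) F J =
  \sum_(J : {set T} | J \subset X) F J + \sum_(J : {set T} | J \subset X) F (k |: J).
Proof.
move=> kX; rewrite (bigID (fun J : {set T} => k \in J)) /= addrC.
congr (_ + _); first by apply: eq_bigl => J; rewrite -subsetD1 setU1K.
rewrite (reindex_onto (fun J : {set T} => k |: J) (fun J => J :\ k)) /=; last first.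
  by move=> J /andP[_ kJ]; rewrite setD1K.
apply: eq_bigl => J; apply/idP/idP.
- case/andP=> /andP[JX _] /eqP JJ.
  by rewrite -(setU1K kX) -JJ setSD.
- move=> JX; have kJ : k \notin J by apply: contra kX; apply: subsetP.
  by rewrite setUS //= setU11 setU1K ?eqxx.
Qed.

Lemma sum_sign_subset (R : nzRingType) (T : finType) (A : {set T}) :
  \sum_(J : {set T} | J \subset A) (-1) ^+ #|J| = (A == set0)%:R :> R.
Proof.
have [->|[k kA]] := set_0Vmem A.
  by rewrite eqxx (big_pred1 set0) ?cards0 // => J; rewrite subset0.
have kAk : k \notin A :\ k by rewrite setD11.
have /negPf-> : A != set0 by apply/set0Pn; exists k.
rewrite -(setD1K kA) big_subsetU1 //.
rewrite [X in _ + X](eq_bigr (fun J : {set T} => - (-1) ^+ #|J|)) ?sumrN ?subrr //.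
move=> J JA; have kJ : k \notin J by apply: contra kAk; apply: subsetP.
by rewrite cardsU1 kJ exprS mulN1r.
Qed.

Lemma sign_setD (R : nzRingType) (T : finType) (I J : {set T}) :
  J \subset I -> (-1) ^+ #|I :\: J| = (-1) ^+ #|I| * (-1) ^+ #|J| :> R.
Proof.
move=> JI; rewrite cardsD (setIidPr JI).
by rewrite -{2}(subnK (subset_leq_card JI)) exprD -mulrA -expr2 sqrr_sign mulr1.
Qed.

Lemma qS_set0 (R : nzRingType) n (e : rel 'I_n) (p : 'I_n -> R) :
  qS e p set0 = qbreve e p setT.
Proof. by apply: eq_big => [I|I _]; rewrite ?sub0set ?subsetT ?setD0. Qed.

Lemma sum_qS_subset (R : comNzRingType) n (e : rel 'I_n) (p : 'I_n -> R)
    (S : {set 'I_n}) :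
  \sum_(J : {set 'I_n} | J \subset S) qS e p J = qbreve e p (~: S).
Proof.
rewrite /qS /qbreve (exchange_big_dep (indep e)) /=; last by move=> J I _ /andP[].
rewrite big_mkcondr; apply: eq_bigr => I indI.
rewrite (eq_bigl (fun J : {set 'I_n} => J \subset S :&: I)); last first.
  by move=> J; rewrite subsetI indI.
rewrite (eq_bigr (fun J : {set 'I_n} =>
  (-1) ^+ #|I| * pw p I * (-1) ^+ #|J|)); last first.
  by move=> J; rewrite subsetI => /andP[_ JI]; rewrite sign_setD // mulrAC.
rewrite -mulr_sumr sum_sign_subset setIC setI_eq0 disjoints_subset.
by case: ifP; rewrite ?mulr1 ?mulr0.
Qed.

Lemma qbreve_setC1 (R : comNzRingType) n (e : rel 'I_n) (p : 'I_n -> R)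
    (j : 'I_n) :
  qbreve e p (~: [set j]) = qS e p set0 + qS e p [set j].
Proof.
rewrite -sum_qS_subset (eq_bigl (fun J => J \in [set set0; [set j]])) => [|J].
  by rewrite big_setU1 ?big_set1 // !inE eq_sym -cards_eq0 cards1.
by rewrite -powerset1 powersetE.
Qed.

Lemma indepP n (e : rel 'I_n) (I : {set 'I_n}) :
  reflect {in I &, forall i j, ~~ e i j} (indep e I).
Proof.
apply: (iffP forall_inP) => [H i j iI jI | H i iI].
  by move/forall_inP: (H i iI); apply.
by apply/forall_inP => j; apply: H.
Qed.

Definition nbhd n (e : rel 'I_n) (k : 'I_n) : {set 'I_n} := [set i | e k i].

Lemma indepU1 n (e : rel 'I_n) (J : {set 'I_n}) (k : 'I_n) :
  simple_graph e -> k \notin J ->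
  indep e (k |: J) = indep e J && [disjoint J & nbhd e k].
Proof.
move=> [sym irr] kJ; rewrite disjoints_subset; apply/idP/andP.
- move/indepP=> H; split.
    by apply/indepP => i j iJ jJ; apply: H; rewrite setU1r.
  by apply/subsetP=> i iJ; rewrite !inE H ?setU11 ?setU1r.
- case=> /indepP H /subsetP D; apply/indepP=> i j /setU1P[->|iJ] /setU1P[->|jJ].
  + by rewrite irr.
  + by have := D j jJ; rewrite !inE.
  + by rewrite sym; have := D i iJ; rewrite !inE.
  + exact: H.
Qed.

Lemma qbreve_setU1 (R : comNzRingType) n (e : rel 'I_n) (p : 'I_n -> R)
    (W : {set 'I_n}) k :
  simple_graph e -> k \notin W ->
  qbreve e p (k |: W) = qbreve e p W - p k * qbreve e p (W :\: nbhd e k).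
Proof.
move=> sg kW; rewrite /qbreve !big_mkcondl big_subsetU1 //; congr (_ + _).
rewrite mulr_sumr -sumrN.
rewrite [RHS](eq_bigl (fun I : {set 'I_n} =>
  (I \subset W) && [disjoint I & nbhd e k])); last first.
  by move=> I; rewrite subsetD.
rewrite big_mkcondr; apply: eq_bigr => J JW.
have kJ : k \notin J by apply: contra kW; apply: subsetP.
rewrite indepU1 // /pw big_setU1 //= cardsU1 kJ.
case: (indep e J); case: [disjoint J & nbhd e k]; rewrite ?mulr0 ?oppr0 //=.
by rewrite exprS mulN1r mulNr mulrCA.
Qed.

Section ShearerRatios.

Variables (R : realFieldType) (n : nat) (e : rel 'I_n) (p : 'I_n -> R).
Hypothesis sg : simple_graph e.
Hypothesis p_ge0 : forall i, 0 <= p i.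
Hypothesis qbreve_gt0 : forall W, 0 < qbreve e p W.

Local Notation q := (qbreve e p).

Lemma qbreve_setU1_le (W : {set 'I_n}) k : k \notin W -> q (k |: W) <= q W.
Proof.
move=> kW; rewrite qbreve_setU1 // gerBl.
by rewrite mulr_ge0 // ltW.
Qed.

Definition qratio k (W : {set 'I_n}) : R := q W / q (k |: W).

Lemma qratio_leE k (X Y : {set 'I_n}) :
  (qratio k X <= qratio k Y) = (q X * q (k |: Y) <= q Y * q (k |: X)).
Proof. by rewrite /qratio ler_pdivrMr // mulrAC ler_pdivlMr. Qed.

(* Expanding [q] along [k], the claim reduces to [qbreve_setU1_le] when [j] is
   a neighbour of [k], and to the hypothesis otherwise. *)
Lemma le_qratio_setU1 k j (V : {set 'I_n}) :
  k \notin V -> j \notin V -> k != j ->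
  qratio j (V :\: nbhd e k) <= qratio j V ->
  qratio k V <= qratio k (j |: V).
Proof.
move=> kV jV kj; rewrite !qratio_leE => hj.
have kjV : k \notin j |: V by rewrite !inE negb_or kj.
rewrite (qbreve_setU1 p sg kjV) (qbreve_setU1 p sg kV).
suff: q (j |: V) * q (V :\: nbhd e k) <= q V * q ((j |: V) :\: nbhd e k).
  by have := p_ge0 k; nra.
case ekj: (e k j).
- have -> : (j |: V) :\: nbhd e k = V :\: nbhd e k.
    by apply/setP=> x; rewrite !inE; case: eqP => // ->; rewrite ekj.
  by rewrite ler_wpM2r ?qbreve_setU1_le // ltW.
- have -> : (j |: V) :\: nbhd e k = j |: (V :\: nbhd e k).
    by apply/setP=> x; rewrite !inE; case: eqP => // ->; rewrite ekj.
  by rewrite mulrC.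
Qed.

Lemma le_qratio_subset k (W' W : {set 'I_n}) :
  W' \subset W -> k \notin W -> qratio k W' <= qratio k W.
Proof.
move: {2}#|W| (leqnn #|W|) => m; elim: m k W' W => [|m IH] k W' W hW sW'W kW.
  by move: hW sW'W; rewrite leqn0 => /eqP/cards0_eq->; rewrite subset0 => /eqP->.
have [-> //|neW'W] := eqVneq W' W.
have /properP[_ [j jW jW']] : W' \proper W by rewrite properEneq neW'W.
set V := W :\ j.
have jV : j \notin V by rewrite setD11.
have hV : (#|V| <= m)%N by move: hW; rewrite (cardsD1 j W) jW.
have kV : k \notin V by apply: contra kW; apply: subsetP; apply: subsetDl.
have kj : k != j by apply: contraNneq kW => ->.
apply: le_trans (IH k W' V hV _ kV) _; first by rewrite subsetD1 sW'W jW'.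
rewrite -(setD1K jW) le_qratio_setU1 // IH ?subsetDl //.
Qed.

Lemma qbreve_setC_le_prod (S : {set 'I_n}) :
  q (~: S) / q setT <= \prod_(j in S) qratio j (~: [set j]).
Proof.
move: {2}#|S| (leqnn #|S|) => m; elim: m S => [|m IH] S hS;
  have [->|[j jS]] := set_0Vmem S;
  rewrite ?big_set0 ?setC0 ?divff ?gt_eqF //; first by rewrite (cardsD1 j S) jS in hS.
rewrite (big_setD1 j jS) /=.
have hS' : (#|S :\ j| <= m)%N by move: hS; rewrite (cardsD1 j S) jS.
have -> : q (~: S) / q setT = qratio j (~: S) * (q (~: (S :\ j)) / q setT).
  have jS' : j |: ~: S = ~: (S :\ j) by rewrite setCD setUC.
  by rewrite /qratio jS' mulrA divfK ?gt_eqF.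
by rewrite ler_pM ?divr_ge0 ?(ltW (qbreve_gt0 _)) ?IH //
  le_qratio_subset ?setCS ?sub1set ?inE ?eqxx.
Qed.

End ShearerRatios.

Theorem mainTheorem12 (R : realFieldType) (n : nat) (e : rel 'I_n)
  (p : 'I_n -> R) :
  simple_graph e -> shearer e p ->
  forall S : {set 'I_n},
    \sum_(J : {set 'I_n} | J \subset S) qS e p J / qS e p set0
      <= \prod_(j in S) (1 + qS e p [set j] / qS e p set0).
Proof.
move=> sg [p01 q_gt0] S.
have p_ge0 i : 0 <= p i by case/andP: (p01 i) => /ltW.
rewrite -mulr_suml sum_qS_subset.
rewrite (eq_bigr (fun j => qratio e p j (~: [set j]))) ?qS_set0.
  exact: qbreve_setC_le_prod.
move=> j _; rewrite /qratio setUCr qbreve_setC1 -qS_set0 mulrDl divff //.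
by rewrite qS_set0 gt_eqF.
Qed.
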